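(* Assume $\|\mathbf{x}_t\|_\infty\le1$ for all $t$. For any $\tau\ge1$, let $\mathbf{z}_\tau=\mathbf{h}_{\tau^2}\hat{\mathbf{w}}_{\tau-1}-\mathbf{x}_{\tau^2}\mathbf{x}_{\tau^2}^\top\hat{\mathbf{w}}_{\tau-1}$. Then for all $i\in[d]$, $$|z_{\tau,i}|\le\frac{(d-1)(d-2)}{(k-1)(k-2)}\|\hat{\mathbf{w}}_{\tau-1}\|_1,\qquad\mathbb{E}_\tau[z_{\tau,i}^2]\le\frac{2(d-1)}{k-1}\|\hat{\mathbf{w}}_{\tau-1}\|_1^2.$$
   Context: Integers $3\le k\le d-3$, $[d]=\{1,\dots,d\}$. SAMPLING$(k,d,\mathbf{w})$ for nonzero $\mathbf{w}\in\mathbb{R}^d$: with $q_i=|w_i|/\|\mathbf{w}\|_1$, draw $I_1\in[d]$ with $\mathbb{P}(I_1=i)=q_i$, then $k-1$ distinct indices uniformly without replacement from $[d]\setminus\{I_1\}$; output the $k$-set $B$. At round $\tau$, $B_\tau=$SAMPLING$(k,d,\hat{\mathbf{w}}_{\tau-1})$ for a nonzero vector $\hat{\mathbf{w}}_{\tau-1}$ determined by $B_1,\dots,B_{\tau-1}$ ($\hat{\mathbf{w}}_0=\frac1d\mathbf{1}_d$). $\mathbb{P}$ and $\mathbb{E}_\tau[\cdot]=\mathbb{E}[\cdot\mid B_1,\dots,B_{\tau-1}]$ are over $B_\tau$. The instance $\mathbf{x}_{\tau^2}\in\mathbb{R}^d$ is fixed given the past; $h_{\tau^2}[i,i]=\frac{x_{\tau^2,i}^2}{\mathbb{P}[i\in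 B_\tau]}\mathbb{I}_{i\in B_\tau}$ and $h_{\tau^2}[i,j]=\frac{x_{\tau^2,i}x_{\tau^2,j}}{\mathbb{P}[i,j\in B_\tau]}\mathbb{I}_{i,j\in B_\tau}$ for $i\ne j$. *)

From mathcomp Require Import all_boot all_order all_algebra.
Set Implicit Arguments. Unset Strict Implicit. Unset Printing Implicit Defensive.
Import Order.TTheory GRing.Theory Num.Theory.
Local Open Scope ring_scope.

Section Sampling.
Variables (R : realFieldType) (d k : nat).

Definition norm1 (w : 'I_d -> R) : R := \sum_(i < d) `|w i|.

Definition qprob (w : 'I_d -> R) (i : 'I_d) : R := `|w i| / norm1 w.

(* the (k-1)-subsets of [d] \ {i}: possible outcomes of drawing k-1 distinct
   indices uniformly without replacement from [d] \ {i} (as a set) *)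
Definition rest_sets (i : 'I_d) : {set {set 'I_d}} :=
  [set A : {set 'I_d} | (A \subset [set~ i]) && (#|A| == k.-1)%N].

(* probability that SAMPLING(k,d,w) outputs the set B:
   P(B) = sum_i q_i * sum_{A in rest_sets i} (1/#|rest_sets i|) [i |: A = B] *)
Definition samp_prob (w : 'I_d -> R) (B : {set 'I_d}) : R :=
  \sum_(i < d) qprob w i *
    \sum_(A in rest_sets i) (if i |: A == B then (#|rest_sets i|%:R)^-1 else 0).

Definition Expect (w : 'I_d -> R) (f : {set 'I_d} -> R) : R :=
  \sum_(B : {set 'I_d}) samp_prob w B * f B.

Definition pin1 (w : 'I_d -> R) (i : 'I_d) : R :=
  \sum_(B : {set 'I_d} | i \in B) samp_prob w B.
Definition pin2 (w : 'I_d -> R) (i j : 'I_d) : R :=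
  \sum_(B : {set 'I_d} | (i \in B) && (j \in B)) samp_prob w B.

Definition hmat (w x : 'I_d -> R) (B : {set 'I_d}) (i j : 'I_d) : R :=
  if i == j then (if i \in B then x i ^+ 2 / pin1 w i else 0)
  else (if (i \in B) && (j \in B) then x i * x j / pin2 w i j else 0).

Definition zvec (w x : 'I_d -> R) (B : {set 'I_d}) (i : 'I_d) : R :=
  \sum_(j < d) hmat w x B i j * w j - x i * \sum_(j < d) x j * w j.

End Sampling.

(* Given I_1 = i, the other k-1 indices form a uniform (k-1)-subset of [d]\{i}, which
   contains a fixed m-set avoiding i with probability a_m = C(d-1-m, k-1-m) / C(d-1, k-1).
   Hence P[S \subset B] = q(S) a_{|S|-1} + (1 - q(S)) a_{|S|} with q(S) = sum_{i in S} q_i: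
   a mixture of two consecutive terms of the nonincreasing, log-concave sequence a,
   where a_1 = (k-1)/(d-1) and a_2 = (k-1)(k-2)/((d-1)(d-2)).
   Every pair probability is therefore at least a_2, so every entry of h - x x^T is at most
   1/a_2 in absolute value, which gives the first bound.  For the second, h is unbiased, so
   E z_i^2 <= E (h w)_i^2, which is
     sum_{j,l} x_i^2 x_j x_l w_j w_l P[i,j,l in B] / (P[i,j in B] P[i,l in B]).
   Log-concavity gives P[i,j,l in B] <= P[i,j in B] P[i,l in B] / a_1 for distinct indices,
   and the diagonal terms are controlled by P[i,j in B] >= q_j a_1 = a_1 |w_j| / ||w||_1. *)

From mathcomp Require Import all_boot all_order all_algebra.
From mathcomp Require Import zify ring.
Set Implicit Arguments. Unset Strict Implicit. Unset Printing Implicit Defensive.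
Import Order.TTheory GRing.Theory Num.Theory.

(* The factor [m <= r] matters: by truncated subtraction ['C(n - m, r - m)] is 1 when [r < m]. *)
Definition nsupsets (n r m : nat) : nat := 'C(n - m, r - m) * (m <= r).

Lemma card_supsets (T : finType) (U S : {set T}) (r : nat) : S \subset U ->
  #|[set A : {set T} | (A \subset U) && (#|A| == r) && (S \subset A)]| =
  nsupsets #|U| r #|S|.
Proof.
move=> SU; rewrite /nsupsets; case: (leqP #|S| r) => [Sr | rS]; last first.
  rewrite muln0; apply: eq_card0 => A; rewrite !inE.
  by apply/negP => /andP[/andP[_ /eqP cardA] /subset_leq_card]; rewrite cardA leqNgt rS.
have addSK (A' : {set T}) : A' \subset U :\: S -> (A' :|: S) :\: S = A'.
  move=> /subsetP A'US; apply/setP => x; rewrite !inE.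
  by case: (boolP (x \in A')) => [/A'US | _]; rewrite ?inE; case: (x \in S).
have -> : [set A : {set T} | (A \subset U) && (#|A| == r) && (S \subset A)] =
    (fun A' => A' :|: S) @: [set A' : {set T} | A' \subset U :\: S & #|A'| == r - #|S|].
  apply/setP => A; rewrite !inE; apply/idP/imsetP.
  - case/andP => /andP[AU /eqP <-] SA; exists (A :\: S).
      by rewrite inE setSD //= cardsD (setIidPr SA).
    apply/setP => x; rewrite !inE.
    by case: (boolP (x \in S)) => [/(subsetP SA) -> | _]; rewrite ?orbT ?orbF.
  - case=> A'; rewrite inE => /andP[A'US /eqP cardA'] ->.
    rewrite subUset SU subsetUr (subset_trans A'US (subsetDl _ _)) /=.
    move: cardA'; rewrite -{1}(addSK _ A'US) cardsD (setIidPr (subsetUr _ _)) => cardA'.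
    by rewrite andbT -(subnK (subset_leq_card (subsetUr A' S))) cardA' subnK.
rewrite muln1 card_in_imset ?cards_draws ?cardsD ?(setIidPr SU) //.
by move=> A1 A2; rewrite !inE => /andP[/addSK + _] /andP[/addSK + _] eqA12 => <- <-; rewrite eqA12.
Qed.

Lemma nsupsets_rec (n r m : nat) : m <= r ->
  (n - m) * nsupsets n r m.+1 = (r - m) * nsupsets n r m.
Proof.
move=> mr; case: (eqVneq m r) => [-> | neq]; first by rewrite /nsupsets subnn ltnn !muln0.
have {neq mr} mr : m < r by rewrite ltn_neqAle neq.
by rewrite /nsupsets mr (ltnW mr) !muln1 subnS -(subnSK mr) mul_bin_diag.
Qed.

Lemma nsupsets_gt0 (n r m : nat) : r <= n -> m <= r -> 0 < nsupsets n r m.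
Proof. by move=> rn mr; rewrite /nsupsets mr muln1 bin_gt0 leq_sub2r. Qed.

Lemma nsupsets_eq0 (n r m : nat) : r < m -> nsupsets n r m = 0.
Proof. by move=> rm; rewrite /nsupsets leqNgt rm muln0. Qed.

Lemma cards3 (T : finType) (i j l : T) : i != j -> i != l -> j != l ->
  #|[set i; j; l]| = 3.
Proof.
by move=> ij il jl; rewrite -setUA !cardsU1 cards1 !inE negb_or ij il jl.
Qed.

Local Open Scope ring_scope.

Lemma sum_set3 (V : nmodType) (T : finType) (i j l : T) (F : T -> V) :
  i != j -> i != l -> j != l -> \sum_(m in [set i; j; l]) F m = F i + F j + F l.
Proof.
move=> ij il jl; have i_notin : i \notin [set j; l] by rewrite !inE negb_or ij il.
by rewrite -setUA big_setU1 //= big_setU1 /= ?big_set1 ?addrA // inE.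
Qed.

Section SupsetRatio.
Variables (R : realFieldType) (n r : nat).
Hypothesis rn : (r < n)%N.

Definition supset_ratio (m : nat) : R := (nsupsets n r m)%:R / (nsupsets n r 0)%:R.

Lemma supset_ratio0 : supset_ratio 0 = 1.
Proof. by rewrite /supset_ratio divff // pnatr_eq0 -lt0n nsupsets_gt0 // ltnW. Qed.

Lemma supset_ratio_ge0 (m : nat) : 0 <= supset_ratio m.
Proof. by rewrite divr_ge0. Qed.

Lemma supset_ratioS (m : nat) : (m <= r)%N ->
  supset_ratio m.+1 = supset_ratio m * ((r - m)%:R / (n - m)%:R).
Proof.
move=> mr; have nm0 : (n - m)%:R != 0 :> R by rewrite pnatr_eq0 subn_eq0 -ltnNge (leq_ltn_trans mr).
rewrite /supset_ratio mulrAC; congr (_ / _); apply: (mulfI nm0).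
by rewrite -natrM nsupsets_rec // natrM; field.
Qed.

Lemma supset_ratio_gt0 (m : nat) : (m <= r)%N -> 0 < supset_ratio m.
Proof. by move=> mr; rewrite divr_gt0 // ltr0n nsupsets_gt0 // ltnW. Qed.

Lemma supset_ratio_Sle (m : nat) : supset_ratio m.+1 <= supset_ratio m.
Proof.
case: (leqP m r) => [mr | rm].
  2: by rewrite {1}/supset_ratio nsupsets_eq0 ?leqW // mul0r supset_ratio_ge0.
rewrite supset_ratioS // ler_piMr ?supset_ratio_ge0 //.
have nm : 0 < (n - m)%:R :> R by rewrite ltr0n subn_gt0 (leq_ltn_trans mr).
by rewrite ler_pdivrMr // mul1r ler_nat leq_sub2r // ltnW.
Qed.

Lemma supset_ratio_le (m m' : nat) : (m <= m')%N -> supset_ratio m' <= supset_ratio m.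
Proof.
apply: (homo_leq (r := fun x y => y <= x)) => [x | y x z xy yz | j].
- exact: lexx.
- exact: le_trans yz xy.
- exact: supset_ratio_Sle.
Qed.

Lemma supset_ratio_le1 (m : nat) : supset_ratio m <= 1.
Proof. by rewrite -supset_ratio0 supset_ratio_le. Qed.

Lemma supset_ratio_log_concave (m : nat) : (m < r)%N ->
  supset_ratio m * supset_ratio m.+2 <= supset_ratio m.+1 ^+ 2.
Proof.
move=> mr; rewrite [supset_ratio m.+2]supset_ratioS // mulrCA expr2.
rewrite ler_wpM2l ?supset_ratio_ge0 // [X in _ <= X]supset_ratioS ?(ltnW mr) //.
rewrite ler_wpM2l ?supset_ratio_ge0 //.
have nm1 : 0 < (n - m.+1)%:R :> R by rewrite ltr0n subn_gt0 (leq_ltn_trans mr).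
have nm : 0 < (n - m)%:R :> R by rewrite ltr0n subn_gt0 (ltn_trans mr).
by rewrite ler_pdivrMr // mulrAC ler_pdivlMr // -!natrM ler_nat; nia.
Qed.

Lemma supset_ratio1 : supset_ratio 1 = r%:R / n%:R.
Proof. by rewrite supset_ratioS // supset_ratio0 mul1r !subn0. Qed.

Lemma supset_ratio2 : (1 <= r)%N -> supset_ratio 2 = (r * r.-1)%:R / (n * n.-1)%:R.
Proof. by move=> r1; rewrite supset_ratioS // supset_ratio1 !subn1 mulf_div -!natrM. Qed.
End SupsetRatio.

Lemma centered_moment2_le (R : realFieldType) (T : finType) (p f : T -> R) (c : R) :
  \sum_t p t = 1 -> \sum_t p t * f t = c ->
  \sum_t p t * (f t - c) ^+ 2 <= \sum_t p t * f t ^+ 2.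
Proof.
move=> p1 pf; have -> : \sum_t p t * (f t - c) ^+ 2 =
    \sum_t p t * f t ^+ 2 - 2 * c * \sum_t p t * f t + c ^+ 2 * \sum_t p t.
  rewrite !mulr_sumr -sumrB -big_split /=; apply: eq_bigr => t _; ring.
rewrite pf p1; set m2 := \sum_t _.
have -> : m2 - 2 * c * c + c ^+ 2 * 1 = m2 - c ^+ 2 by ring.
by rewrite gerDl oppr_le0 sqr_ge0.
Qed.

Lemma mixture_pair_product_ge (R : realDomainType) (a b c U V t : R) :
  0 <= a -> 0 <= b -> 0 <= c -> a + b + c <= 1 -> 0 <= V -> V <= U -> U * t <= V ^+ 2 ->
  U * ((a + b + c) * V + (1 - (a + b + c)) * t) <=
  ((a + b) * U + (1 - (a + b)) * V) * ((a + c) * U + (1 - (a + c)) * V).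
Proof.
move=> a0 b0 c0 abc1 V0 VU UtV; rewrite -subr_ge0.
have -> : ((a + b) * U + (1 - (a + b)) * V) * ((a + c) * U + (1 - (a + c)) * V) -
    U * ((a + b + c) * V + (1 - (a + b + c)) * t) =
    (1 - (a + b + c)) * (V ^+ 2 - U * t) + a * V * (U - V) + (a + b) * (a + c) * (U - V) ^+ 2.
  by ring.
apply: addr_ge0; first apply: addr_ge0.
- by rewrite mulr_ge0 // subr_ge0.
- by rewrite !mulr_ge0 // subr_ge0.
- by rewrite mulr_ge0 ?sqr_ge0 // mulr_ge0 // addr_ge0.
Qed.

Section InclusionProbability.
Variables (R : realFieldType) (d k : nat) (w : 'I_d -> R).

Definition incl_prob (S : {set 'I_d}) : R :=
  \sum_(B : {set 'I_d} | S \subset B) samp_prob k w B.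

Local Notation a := (supset_ratio R d.-1 k.-1).

Lemma card_rest_supsets (i : 'I_d) (S : {set 'I_d}) :
  #|[set A in rest_sets k i | S \subset i |: A]| = nsupsets d.-1 k.-1 #|S :\ i|.
Proof.
rewrite -[d in d.-1]card_ord -(cardsC1 i) -card_supsets; last first.
  by apply/subsetP => j; rewrite !inE => /andP[].
by apply: eq_card => A; rewrite !inE subDset.
Qed.

Lemma incl_probE (S : {set 'I_d}) :
  incl_prob S = \sum_(i < d) qprob w i * a #|S :\ i|.
Proof.
rewrite /incl_prob /samp_prob exchange_big /=; apply: eq_bigr => i _.
rewrite -mulr_sumr exchange_big /=; congr (_ * _).
set c := (#|rest_sets k i|%:R)^-1.
have hit A : \sum_(B : {set 'I_d} | S \subset B) (if i |: A == B then c else 0) =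
             if S \subset i |: A then c else 0.
  rewrite -big_mkcondr /=; case: ifP => SA.
    apply: (big_pred1 (i |: A)) => B /=.
    by rewrite [B == _]eq_sym andbC; case: eqP => [<- | _].
  by apply: big_pred0 => B; rewrite andbC; case: eqP => [<- | _].
rewrite (eq_bigr _ (fun A _ => hit A)) -big_mkcondr sumr_const -cardsE.
have rest0 := card_rest_supsets i set0; rewrite set0D cards0 in rest0.
rewrite card_rest_supsets /supset_ratio -(mulr_natl c) /c -rest0.
by congr (_ * (_%:R)^-1); apply: eq_card => A; rewrite !inE sub0set andbT.
Qed.

Hypothesis w_neq0 : exists i, w i != 0.

Lemma norm1_gt0 : 0 < norm1 w.
Proof.
case: w_neq0 => i0 wi0; rewrite /norm1 (bigD1 i0) //=.
by rewrite ltr_pwDl ?normr_gt0 ?sumr_ge0.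
Qed.

Lemma qprob_ge0 (i : 'I_d) : 0 <= qprob w i.
Proof. by rewrite divr_ge0 // ltW // norm1_gt0. Qed.

Lemma sum_qprob : \sum_(i < d) qprob w i = 1.
Proof. by rewrite -mulr_suml divff // lt0r_neq0 // norm1_gt0. Qed.

Lemma normr_qprob (j : 'I_d) : `|w j| = qprob w j * norm1 w.
Proof. by rewrite divfK // lt0r_neq0 // norm1_gt0. Qed.

Lemma sum_qprob_ge0 (S : {set 'I_d}) : 0 <= \sum_(i in S) qprob w i.
Proof. by rewrite sumr_ge0 // => i _; exact: qprob_ge0. Qed.

Lemma sum_qprob_le1 (S : {set 'I_d}) : \sum_(i in S) qprob w i <= 1.
Proof.
rewrite -sum_qprob [X in _ <= X](bigID (mem S)) /= lerDl.
by rewrite sumr_ge0 // => i _; exact: qprob_ge0.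
Qed.

Lemma incl_prob_split (S : {set 'I_d}) : incl_prob S =
  (\sum_(i in S) qprob w i) * a #|S|.-1 + (1 - \sum_(i in S) qprob w i) * a #|S|.
Proof.
rewrite incl_probE (bigID (mem S)) /=.
have -> : 1 - \sum_(i in S) qprob w i = \sum_(i | i \notin S) qprob w i.
  by rewrite -sum_qprob (bigID (mem S)) /= addrAC subrr add0r.
rewrite !mulr_suml; congr (_ + _); apply: eq_bigr => i iS.
  by rewrite (cardsD1 i S) iS.
by rewrite (cardsD1 i S) (negbTE iS).
Qed.

Hypothesis k_lt_d : (k.-1 < d.-1)%N.

Lemma incl_prob_ge_card (S : {set 'I_d}) : a #|S| <= incl_prob S.
Proof.
rewrite incl_prob_split -[X in X <= _]mul1r -[X in X * _](subrK (\sum_(i in S) qprob w i)).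
rewrite addrC mulrDl lerD2r ler_wpM2l ?sum_qprob_ge0 // supset_ratio_le //; lia.
Qed.

Lemma incl_prob_ge0 (S : {set 'I_d}) : 0 <= incl_prob S.
Proof. exact: le_trans (supset_ratio_ge0 _ _ _ _) (incl_prob_ge_card S). Qed.

Lemma incl_prob_le1 (S : {set 'I_d}) : incl_prob S <= 1.
Proof.
rewrite incl_prob_split -[X in _ <= X](subrK (\sum_(i in S) qprob w i)) addrC.
rewrite lerD ?ler_piMr ?sum_qprob_ge0 ?subr_ge0 ?sum_qprob_le1 ?supset_ratio_le1 //.
Qed.

Lemma incl_prob_ge_qprob (S : {set 'I_d}) (j : 'I_d) : j \in S ->
  qprob w j * a #|S|.-1 <= incl_prob S.
Proof.
move=> jS; rewrite incl_prob_split; apply: ler_wpDr.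
  by rewrite mulr_ge0 ?subr_ge0 ?sum_qprob_le1 ?supset_ratio_ge0.
apply: ler_wpM2r; first exact: supset_ratio_ge0.
rewrite (bigD1 j) //= lerDl.
by rewrite sumr_ge0 // => i _; exact: qprob_ge0.
Qed.

Local Notation u := (a 1).
Local Notation v := (a 2).

Lemma incl_prob_pair_ge (i j : 'I_d) : v <= incl_prob [set i; j].
Proof.
apply: le_trans (incl_prob_ge_card _); apply: supset_ratio_le => //.
by rewrite cards2; case: (i != j).
Qed.

Lemma incl_prob1_ge (i : 'I_d) : u <= incl_prob [set i].
Proof. by have := incl_prob_ge_card [set i]; rewrite cards1. Qed.

Lemma qprob_le_incl_pair (i j : 'I_d) : qprob w j * u <= incl_prob [set i; j].
Proof.
have j_in : j \in [set i; j] by rewrite !inE eqxx orbT.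
apply: le_trans (incl_prob_ge_qprob j_in); apply: ler_wpM2l; first exact: qprob_ge0.
by apply: supset_ratio_le => //; rewrite cards2; case: (i != j).
Qed.

Hypothesis k_ge3 : (3 <= k)%N.

Lemma incl_prob_pairE (i j : 'I_d) : i != j ->
  incl_prob [set i; j] = (qprob w i + qprob w j) * u + (1 - (qprob w i + qprob w j)) * v.
Proof.
move=> ij; rewrite incl_prob_split cards2 ij big_setU1 ?big_set1 //=.
by rewrite inE.
Qed.

Lemma incl_prob_tripleE (i j l : 'I_d) : i != j -> i != l -> j != l ->
  incl_prob [set i; j; l] = (qprob w i + qprob w j + qprob w l) * v +
    (1 - (qprob w i + qprob w j + qprob w l)) * a 3.
Proof.
by move=> ij il jl; rewrite incl_prob_split cards3 ?sum_set3.
Qed.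

Lemma incl_prob_triple_le (i j l : 'I_d) : i != j -> i != l -> j != l ->
  u * incl_prob [set i; j; l] <= incl_prob [set i; j] * incl_prob [set i; l].
Proof.
move=> ij il jl; rewrite incl_prob_tripleE // !incl_prob_pairE //.
apply: mixture_pair_product_ge; rewrite ?qprob_ge0 ?supset_ratio_ge0 ?supset_ratio_Sle //.
- by rewrite -sum_set3 ?sum_qprob_le1.
- by apply: supset_ratio_log_concave => //; lia.
Qed.

Lemma eq_Expect (f g : {set 'I_d} -> R) : f =1 g -> Expect k w f = Expect k w g.
Proof. by move=> fg; apply: eq_bigr => B _; rewrite fg. Qed.

Lemma Expect_incl (S : {set 'I_d}) (c : R) :
  Expect k w (fun B => if S \subset B then c else 0) = c * incl_prob S.
Proof.
rewrite /Expect /incl_prob mulr_sumr [in RHS]big_mkcond; apply: eq_bigr => B _.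
by case: ifP; rewrite ?mulr0 // mulrC.
Qed.

Lemma sum_samp_prob : \sum_(B : {set 'I_d}) samp_prob k w B = 1.
Proof.
have -> : \sum_(B : {set 'I_d}) samp_prob k w B = incl_prob set0.
  by apply: eq_bigl => B; rewrite sub0set.
rewrite incl_probE -[RHS]sum_qprob; apply: eq_bigr => i _.
by rewrite set0D cards0 supset_ratio0 // mulr1.
Qed.

Lemma Expect_sum (F : 'I_d -> {set 'I_d} -> R) :
  Expect k w (fun B => \sum_(j < d) F j B) = \sum_(j < d) Expect k w (F j).
Proof. by rewrite /Expect exchange_big /=; apply: eq_bigr => B _; rewrite mulr_sumr. Qed.

Lemma ExpectMr (f : {set 'I_d} -> R) (c : R) :
  Expect k w (fun B => f B * c) = Expect k w f * c.
Proof. by rewrite /Expect mulr_suml; apply: eq_bigr => B _; rewrite mulrA. Qed.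

Lemma incl_prob_pair_gt0 (i j : 'I_d) : 0 < incl_prob [set i; j].
Proof. by apply: lt_le_trans (incl_prob_pair_ge i j); apply: supset_ratio_gt0 => //; lia. Qed.

Variable x : 'I_d -> R.

Lemma hmatE (B : {set 'I_d}) (i j : 'I_d) : hmat k w x B i j =
  if [set i; j] \subset B then x i * x j / incl_prob [set i; j] else 0.
Proof.
have pin2E : pin2 k w i j = incl_prob [set i; j].
  by apply: eq_bigl => C; rewrite subUset !sub1set.
rewrite /hmat -pin2E; case: eqP => [<- | _]; last by rewrite subUset !sub1set.
rewrite setUid sub1set expr2 /pin1 /pin2.
by under [in RHS]eq_bigl do rewrite andbb.
Qed.

Lemma Expect_hmat (i j : 'I_d) : Expect k w (fun B => hmat k w x B i j) = x i * x j.
Proof.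
by rewrite (eq_Expect (fun B => hmatE B i j)) Expect_incl divfK // lt0r_neq0 // incl_prob_pair_gt0.
Qed.

Lemma Expect_hmatM (i j l : 'I_d) :
  Expect k w (fun B => hmat k w x B i j * hmat k w x B i l) =
  x i * x j / incl_prob [set i; j] * (x i * x l / incl_prob [set i; l]) *
  incl_prob [set i; j; l].
Proof.
rewrite -Expect_incl; apply: eq_bigr => B _; rewrite !hmatE.
have -> : ([set i; j; l] \subset B) = ([set i; j] \subset B) && ([set i; l] \subset B).
  by rewrite !subUset !sub1set; case: (i \in B).
by case: ([set i; j] \subset B); case: ([set i; l] \subset B); rewrite ?mul0r ?mulr0.
Qed.

Hypothesis x_le1 : forall i, `|x i| <= 1.

Lemma normrM_x_le1 (i j : 'I_d) : `|x i * x j| <= 1.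
Proof. by rewrite normrM mulr_ile1. Qed.

Lemma normr_hmat_sub_le (B : {set 'I_d}) (i j : 'I_d) :
  `|hmat k w x B i j - x i * x j| <= v^-1.
Proof.
have v_gt0 : 0 < v by apply: supset_ratio_gt0 => //; lia.
have v_inv_ge1 : 1 <= v^-1 by rewrite invf_ge1 ?supset_ratio_le1.
rewrite hmatE; case: ifP => _.
  2: by rewrite sub0r normrN; apply: le_trans (normrM_x_le1 i j) v_inv_ge1.
have P_gt0 := incl_prob_pair_gt0 i j.
have P_inv_ge1 : 1 <= (incl_prob [set i; j])^-1 by rewrite invf_ge1 ?incl_prob_le1.
rewrite -{2}[x i * x j]mulr1 -mulrBr normrM [`|_ - 1|]ger0_norm ?subr_ge0 //.
apply: le_trans (ler_wpM2r _ (normrM_x_le1 i j)) _; first by rewrite subr_ge0.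
rewrite mul1r lerBlDr ler_wpDr // lef_pV2 ?posrE //.
exact: incl_prob_pair_ge.
Qed.

Lemma zvec_abs_le (B : {set 'I_d}) (i : 'I_d) : `|zvec k w x B i| <= v^-1 * norm1 w.
Proof.
have -> : zvec k w x B i = \sum_(j < d) (hmat k w x B i j - x i * x j) * w j.
  by rewrite /zvec mulr_sumr -sumrB; apply: eq_bigr => j _; rewrite mulrBl mulrA.
rewrite /norm1 mulr_sumr; apply: le_trans (ler_norm_sum _ _ _) _.
by apply: ler_sum => j _; rewrite normrM ler_wpM2r ?normr_hmat_sub_le.
Qed.

Lemma u_gt0 : 0 < u.
Proof. by apply: supset_ratio_gt0 => //; lia. Qed.

Lemma incl_ratio_le (i j l : 'I_d) : j != l ->
  incl_prob [set i; j; l] / (incl_prob [set i; j] * incl_prob [set i; l]) <= u^-1.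
Proof.
move=> jl; have Pij := incl_prob_pair_gt0 i j; have Pil := incl_prob_pair_gt0 i l.
have single_inv (T : R) : 0 < T -> T / (incl_prob [set i] * T) <= u^-1.
  move=> T_gt0; rewrite invfM mulrCA divff ?lt0r_neq0 // mulr1.
  by rewrite lef_pV2 ?posrE ?u_gt0 ?incl_prob1_ge // (lt_le_trans u_gt0) ?incl_prob1_ge.
case: (eqVneq j i) => [-> | ji].
  by rewrite !setUid; exact: single_inv.
case: (eqVneq l i) => [-> | li].
  by rewrite setUAC !setUid [X in _ / X]mulrC; exact: single_inv.
rewrite ler_pdivrMr ?mulr_gt0 // -(ler_pM2l u_gt0) mulrA mulfV ?mul1r ?lt0r_neq0 ?u_gt0 //.
by apply: incl_prob_triple_le; rewrite // eq_sym.
Qed.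

Lemma normr_div_incl_pair (i j : 'I_d) :
  `|w j| / incl_prob [set i; j] <= u^-1 * norm1 w.
Proof.
have Pij := incl_prob_pair_gt0 i j.
rewrite normr_qprob mulrAC ler_pM2r ?norm1_gt0 //.
by rewrite ler_pdivrMr // mulrC ler_pdivlMr ?u_gt0 // qprob_le_incl_pair.
Qed.

Lemma Expect_hmatM_le (i j l : 'I_d) :
  Expect k w (fun B => hmat k w x B i j * hmat k w x B i l) * (w j * w l) <=
  u^-1 * (`|w j| * `|w l|) + (j == l)%:R * (u^-1 * (`|w j| * norm1 w)).
Proof.
have Pij := incl_prob_pair_gt0 i j; have Pil := incl_prob_pair_gt0 i l.
set rho := incl_prob [set i; j; l] / (incl_prob [set i; j] * incl_prob [set i; l]).
have rho_ge0 : 0 <= rho.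
  by rewrite divr_ge0 ?mulr_ge0 ?incl_prob_ge0.
rewrite Expect_hmatM.
have -> : x i * x j / incl_prob [set i; j] * (x i * x l / incl_prob [set i; l]) *
    incl_prob [set i; j; l] * (w j * w l) = x i * x j * (x i * x l) * (rho * (w j * w l)).
  by rewrite /rho; field; rewrite !lt0r_neq0.
have xx_le1 : `|x i * x j * (x i * x l)| <= 1 by rewrite normrM mulr_ile1 ?normrM_x_le1.
apply: le_trans (ler_norm _) _; rewrite normrM.
apply: le_trans (ler_piMl (normr_ge0 _) xx_le1) _.
rewrite normrM (ger0_norm rho_ge0) normrM.
case: (eqVneq j l) => [jl | jl]; last first.
  by rewrite mul0r addr0 ler_wpM2r ?mulr_ge0 ?incl_ratio_le.
subst l; have -> : rho = (incl_prob [set i; j])^-1.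
  by rewrite /rho -setUA setUid; field; rewrite lt0r_neq0.
have u_inv_ge0 : 0 <= u^-1 by rewrite invr_ge0 ltW ?u_gt0.
rewrite mul1r; apply: ler_wpDl; first by rewrite !mulr_ge0.
rewrite mulrCA [X in _ <= X]mulrCA; apply: ler_wpM2l => //.
by rewrite mulrC normr_div_incl_pair.
Qed.

Lemma second_moment_le (i : 'I_d) :
  Expect k w (fun B => (\sum_(j < d) hmat k w x B i j * w j) ^+ 2) <=
  2 * u^-1 * norm1 w ^+ 2.
Proof.
rewrite (@eq_Expect _ (fun B => \sum_(j < d) \sum_(l < d)
    hmat k w x B i j * hmat k w x B i l * (w j * w l))); last first.
  move=> B; rewrite expr2 mulr_suml; apply: eq_bigr => j _.
  by rewrite mulr_sumr; apply: eq_bigr => l _; ring.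
rewrite Expect_sum; under eq_bigr do rewrite Expect_sum.
under eq_bigr do under eq_bigr do rewrite ExpectMr.
apply: le_trans (ler_sum _ (fun j _ => ler_sum _ (fun l _ => Expect_hmatM_le i j l))) _.
have diag j : \sum_(l < d) (j == l)%:R * (u^-1 * (`|w j| * norm1 w)) = u^-1 * (`|w j| * norm1 w).
  rewrite (bigD1 j) //= eqxx mul1r big1 ?addr0 // => l lj.
  by rewrite eq_sym (negbTE lj) mul0r.
under eq_bigr do rewrite big_split /= diag -mulr_sumr -mulr_sumr -/(norm1 w).
rewrite big_split /= -!mulr_sumr -!mulr_suml -/(norm1 w).
rewrite le_eqVlt; apply/orP; left; apply/eqP; ring.
Qed.

Lemma Expect_zvec_sqr_le (i : 'I_d) :
  Expect k w (fun B => zvec k w x B i ^+ 2) <= 2 * u^-1 * norm1 w ^+ 2.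
Proof.
apply: le_trans (second_moment_le i); apply: centered_moment2_le; first exact: sum_samp_prob.
rewrite -/(Expect _ _ _) Expect_sum mulr_sumr; apply: eq_bigr => j _.
by rewrite ExpectMr Expect_hmat mulrA.
Qed.
End InclusionProbability.

Theorem corollary1 (R : realFieldType) (d k : nat)
  (hk3 : (3 <= k)%N) (hkd : (k <= d - 3)%N)
  (w x : 'I_d -> R) (hw : exists i, w i != 0)
  (hx : forall i, `|x i| <= 1) :
  (forall B : {set 'I_d}, 0 < samp_prob k w B -> forall i : 'I_d,
      `|zvec k w x B i| <=
        ((d - 1) * (d - 2))%:R / ((k - 1) * (k - 2))%:R * norm1 w)
  /\
  (forall i : 'I_d,
      Expect k w (fun B => zvec k w x B i ^+ 2) <=
        2 * (d - 1)%:R / (k - 1)%:R * norm1 w ^+ 2).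
Proof.
have k_lt_d : (k.-1 < d.-1)%N by lia.
have u_inv : (d - 1)%:R / (k - 1)%:R = (supset_ratio R d.-1 k.-1 1)^-1 :> R.
  by rewrite supset_ratio1 // invf_div !subn1.
have v_inv : ((d - 1) * (d - 2))%:R / ((k - 1) * (k - 2))%:R =
             (supset_ratio R d.-1 k.-1 2)^-1 :> R.
  by rewrite supset_ratio2 ?invf_div //; [congr (_%:R / _%:R); lia | lia].
split=> [B _ i | i].
  by rewrite v_inv; apply: zvec_abs_le.
by rewrite -(mulrA 2) u_inv; apply: Expect_zvec_sqr_le.
Qed.
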